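(* Let $k$ and $M$ be positive integers, and let $M=p_{1}^{e_{1}}p_{2}^{e_{2}}\cdots p_{l}^{e_{l}}$ be the prime factorization of $M$, where $p_1,\dots,p_l$ are distinct primes. For any integer $n\geq \max\{e_j\mid 1\le j\le l\}$, \[ \sum_{i=0}^{\varphi(M)-1}L(k,n+i)\equiv \sum_{i=0}^{\varphi(M)-1}L(n+i,k)\equiv 0\pmod{M}. \]
   Context: A matrix with entries in $\{0,1\}$ is called lonesum if it is uniquely determined (among $0$-$1$ matrices of the same size) by its row sum vector and column sum vector. For positive integers $a,b$, $L(a,b)$ denotes the number of lonesum matrices of size $a\times b$. $\varphi$ denotes Euler's totient function. *)

From mathcomp Require Import all_boot all_order all_algebra.
Set Implicit Arguments. Unset Strict Implicit. Unset Printing Implicit Defensive.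

(* 0-1 matrices of size a x b are represented as 'M[bool]_(a, b);
   entry true = 1, false = 0. *)

Definition row_sums (a b : nat) (A : 'M[bool]_(a, b)) : 'I_a -> nat :=
  fun i => \sum_(j < b) nat_of_bool (A i j).
Definition col_sums (a b : nat) (A : 'M[bool]_(a, b)) : 'I_b -> nat :=
  fun j => \sum_(i < a) nat_of_bool (A i j).

Definition lonesum (a b : nat) (A : 'M[bool]_(a, b)) : bool :=
  [forall B : 'M[bool]_(a, b),
     ([forall i, row_sums B i == row_sums A i] &&
      [forall j, col_sums B j == col_sums A j]) ==> (B == A)].

Definition L (a b : nat) : nat := #|[set A : 'M[bool]_(a, b) | lonesum A]|.

From mathcomp Require Import all_boot all_order all_algebra all_fingroup all_solvable zify.
Set Implicit Arguments. Unset Strict Implicit. Unset Printing Implicit Defensive.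

Import GRing.Theory.

(* A 0-1 matrix is lonesum iff it contains no 2x2 switch [[1,0],[0,1]] (swapping
   it preserves all margins), iff it is a threshold matrix A i j = (s i <= g j): for
   a threshold matrix, weighting rows by s and columns by g shows that a matrix B
   with the same margins can only have ones where A has.  The row sets of a
   switch-free matrix form a chain; numbering its m distinct members from the
   largest gives a surjection s from the rows onto [1, m], and counting the members
   containing column j gives g : columns -> [0, m], which hits every level of
   [1, m - 1] because the members are distinct.  This is a bijection, so by
   inclusion-exclusion
     L(a, x) = sum_m S(a, m) * sum_u (-1)^u C(m - 1, u) (m + 1 - u)^x,
   where S(a, m), the number of surjections onto [1, m], is divisible by m.  As
   m C(m - 1, u) = (m - u) C(m, u), summing over x = n + i with i < phi(M) produces
   the factor c * sum_i (c + 1)^(n + i) = (c + 1)^n ((c + 1)^phi(M) - 1), c = m - u,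
   which Euler's theorem for each prime power p^e of M, with e <= n, makes
   divisible by M.  Transposition gives the second sum. *)

Lemma leq_sum_eq (I : finType) (F G : I -> nat) :
  (forall i, F i <= G i) -> \sum_i F i = \sum_i G i -> F =1 G.
Proof.
move=> leFG eqFG i.
have /leqif_sum[_] : forall i, predT i -> F i <= G i ?= iff (F i == G i).
  by move=> ? _; apply/leqif_eq/leFG.
by rewrite eqFG eqxx => /esym/forallP/(_ i)/eqP.
Qed.

Lemma card_ord_range n lo hi : hi <= n -> #|[set t : 'I_n | lo <= t < hi]| = hi - lo.
Proof.
move=> hi_n; rewrite -sum1_card -[hi - lo]muln1 -sum_nat_const_nat.
rewrite (big_nat_widenl _ 0) // (big_nat_widen _ _ _ _ _ hi_n) big_mkord.
by apply: eq_bigl => t; rewrite inE.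
Qed.

(** * Switch-free and threshold matrices *)

Definition switch_free a b (A : 'M[bool]_(a, b)) : bool :=
  [forall i, forall i', forall j, forall j',
     ~~ [&& A i j, ~~ A i j', A i' j' & ~~ A i' j]].

Lemma switch_freeP a b (A : 'M[bool]_(a, b)) :
  reflect (forall i i' j j', A i j -> ~~ A i j' -> A i' j' -> A i' j)
          (switch_free A).
Proof.
apply: (iffP forallP) => [swA i i' j j' Aij Aij' Ai'j'|swA i].
  move: (swA i) => /forallP/(_ i')/forallP/(_ j)/forallP/(_ j').
  by rewrite Aij Aij' Ai'j' /= => /negPn.
apply/forallP=> i'; apply/forallP=> j; apply/forallP=> j'.
by apply/negP => /and4P[Aij Aij' Ai'j']; rewrite (swA _ _ _ _ Aij Aij' Ai'j').
Qed.

Section Switch.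
Variables (a b : nat) (A : 'M[bool]_(a, b)) (i i' : 'I_a) (j j' : 'I_b).
Hypotheses (Aij : A i j) (Aij' : ~~ A i j') (Ai'j' : A i' j') (Ai'j : ~~ A i' j).

Definition switch_mx : 'M[bool]_(a, b) :=
  \matrix_(p, q)
    if (p \in [set i; i']) && (q \in [set j; j']) then ~~ A p q else A p q.

Lemma switch_mx_row p q : p \in [set i; i'] -> switch_mx p q = A p (tperm j j' q).
Proof.
move=> ip; rewrite mxE ip /=; move: ip; rewrite !inE.
case: tpermP => [->|->|/eqP/negbTE-> /eqP/negbTE->] //; rewrite eqxx ?orbT /=;
  by case/orP=> /eqP->; rewrite ?Aij ?Ai'j' ?(negbTE Aij') ?(negbTE Ai'j).
Qed.

Lemma switch_mx_col p q : q \in [set j; j'] -> switch_mx p q = A (tperm i i' p) q.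
Proof.
move=> jq; rewrite mxE jq andbT; move: jq; rewrite !inE.
case: tpermP => [->|->|/eqP/negbTE-> /eqP/negbTE->] //; rewrite eqxx ?orbT /=;
  by case/orP=> /eqP->; rewrite ?Aij ?Ai'j' ?(negbTE Aij') ?(negbTE Ai'j).
Qed.

Lemma row_sums_switch_mx : row_sums switch_mx =1 row_sums A.
Proof.
move=> p; rewrite /row_sums; have [ip|ip] := boolP (p \in [set i; i']).
  rewrite [RHS](reindex_inj (@perm_inj _ (tperm j j'))).
  by apply: eq_bigr => q _; rewrite switch_mx_row.
by apply: eq_bigr => q _; rewrite mxE (negbTE ip).
Qed.

Lemma col_sums_switch_mx : col_sums switch_mx =1 col_sums A.
Proof.
move=> q; rewrite /col_sums; have [jq|jq] := boolP (q \in [set j; j']).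
  rewrite [RHS](reindex_inj (@perm_inj _ (tperm i i'))).
  by apply: eq_bigr => p _; rewrite switch_mx_col.
by apply: eq_bigr => p _; rewrite mxE (negbTE jq) andbF.
Qed.

End Switch.

Lemma lonesum_switch_free a b (A : 'M[bool]_(a, b)) : lonesum A -> switch_free A.
Proof.
move=> /forallP lsA; apply/switch_freeP => i i' j j' Aij Aij' Ai'j'.
apply/negPn/negP => Ai'j.
have margins : [forall p, row_sums (switch_mx A i i' j j') p == row_sums A p]
             && [forall q, col_sums (switch_mx A i i' j j') q == col_sums A q].
  by apply/andP; split; apply/forallP => ?;
    rewrite ?row_sums_switch_mx ?col_sums_switch_mx.
have /eqP/matrixP/(_ i j) := implyP (lsA _) margins.
by rewrite mxE !inE !eqxx /= Aij.
Qed.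

Section Margins.
Variables (a b : nat) (A : 'M[bool]_(a, b)).

Lemma sum_mx_row_weight (w : 'I_a -> nat) :
  \sum_i \sum_j A i j * w i = \sum_i row_sums A i * w i.
Proof. by apply: eq_bigr => i _; rewrite big_distrl. Qed.

Lemma sum_mx_col_weight (v : 'I_b -> nat) :
  \sum_i \sum_j A i j * v j = \sum_j col_sums A j * v j.
Proof. by rewrite exchange_big; apply: eq_bigr => j _; rewrite big_distrl. Qed.

Lemma row_sums_tr : row_sums A^T =1 col_sums A.
Proof. by move=> j; apply: eq_bigr => i _; rewrite mxE. Qed.

Lemma col_sums_tr : col_sums A^T =1 row_sums A.
Proof. by move=> i; apply: eq_bigr => j _; rewrite mxE. Qed.

End Margins.

Definition threshold_mx a b (s : 'I_a -> nat) (g : 'I_b -> nat) : 'M[bool]_(a, b) :=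
  \matrix_(i, j) (s i <= g j).

Lemma threshold_mx_lonesum a b (s : 'I_a -> nat) (g : 'I_b -> nat) :
  lonesum (threshold_mx s g).
Proof.
set A := threshold_mx s g; apply/forallP => B; apply/implyP.
move=> /andP[/forallP rowsB /forallP colsB].
have rows i : row_sums A i = row_sums B i by rewrite (eqP (rowsB i)).
have cols j : col_sums A j = col_sums B j by rewrite (eqP (colsB j)).
(* Equal margins give [\sum A s = \sum B s] and [\sum B g = \sum A g], while
   entrywise [lhs <= rhs], strictly wherever [B] has a one and [A] has not. *)
pose lhs i j := A i j * s i + B i j * g j.
pose rhs i j := B i j * s i + A i j * g j.
have le_lr i j : lhs i j <= rhs i j.
  by rewrite /lhs /rhs mxE; case: (leqP (s i) (g j)); case: (B i j) => //=;
    rewrite ?mul1n ?mul0n ?addn0 ?add0n // => /ltnW.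
have total : \sum_i \sum_j lhs i j = \sum_i \sum_j rhs i j.
  have rowsE : \sum_i row_sums A i * s i = \sum_i row_sums B i * s i.
    by apply: eq_bigr => i _; rewrite rows.
  have colsE : \sum_j col_sums A j * g j = \sum_j col_sums B j * g j.
    by apply: eq_bigr => j _; rewrite cols.
  rewrite /lhs /rhs; under eq_bigr do rewrite big_split.
  under [RHS]eq_bigr do rewrite big_split.
  rewrite !big_split /=.
  by rewrite !sum_mx_row_weight !sum_mx_col_weight rowsE colsE addnC.
have eq_lr i j : lhs i j = rhs i j.
  apply: (leq_sum_eq (le_lr i)); apply: (leq_sum_eq _ total) => i'.
  exact: leq_sum.
have leBA i j : B i j <= A i j.
  move: (eq_lr i j); rewrite /lhs /rhs mxE.
  by case: leqP; case: (B i j) => //=; lia.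
apply/eqP/matrixP => i j.
have := leq_sum_eq (leBA i) (esym (rows i)) j.
by case: (B i j); case: (A i j).
Qed.

Lemma lonesum_tr a b (A : 'M[bool]_(a, b)) : lonesum A -> lonesum A^T.
Proof.
move=> /forallP lsA; apply/forallP => B; apply/implyP.
move=> /andP[/forallP rowsB /forallP colsB].
have margins : [forall i, row_sums B^T i == row_sums A i]
            && [forall j, col_sums B^T j == col_sums A j].
  apply/andP; split; apply/forallP => k.
    by rewrite row_sums_tr -(col_sums_tr A) colsB.
  by rewrite col_sums_tr -(row_sums_tr A) rowsB.
by rewrite -(trmxK B) (eqP (implyP (lsA _) margins)).
Qed.

Lemma L_sym a b : L a b = L b a.
Proof.
rewrite /L -(card_imset _ (@trmx_inj _ a b)); apply: eq_card => B; rewrite inE.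
apply/imsetP/idP => [[A]|lsB]; first by rewrite inE => /lonesum_tr lsA ->.
by exists (trmx B); rewrite ?inE ?lonesum_tr ?trmxK.
Qed.
(** * Functions whose image covers a set *)

Definition cover_count (s N c : nat) : int :=
  (\sum_(u < s.+1) (-1) ^+ u * ('C(s, u) * (N - u) ^ c)%:Z)%R.

Lemma cover_countS s N c :
  cover_count s.+1 N c = (cover_count s N c - cover_count s N.-1 c)%R.
Proof.
rewrite /cover_count big_ord_recl /= bin0 subn0 mul1n expr0 mul1r.
under eq_bigr => u _ do rewrite /bump /= add1n binS mulnDl PoszD mulrDr.
have predN u : N - u.+1 = N.-1 - u by lia.
rewrite big_split /=.
under [X in (_ + (_ + X))%R]eq_bigr => u _ do rewrite predN exprS mulN1r mulNr.
rewrite sumrN addrA; congr (_ - _)%R.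
rewrite [in LHS]big_ord_recr /= bin_small // mul0n mulr0 addr0.
by rewrite [in RHS]big_ord_recl /= bin0 subn0 mul1n expr0 mul1r.
Qed.

Section CoverFfuns.
Variables I T : finType.

Definition cover_ffuns (A U : {set T}) : {set {ffun I -> T}} :=
  [set g in ffun_on A | U \subset [set g i | i : I]].

Lemma card_cover_ffuns_split (A U : {set T}) u :
  #|cover_ffuns A (U :\ u)| =
    #|cover_ffuns A (u |: (U :\ u))| + #|cover_ffuns (A :\ u) (U :\ u)|.
Proof.
rewrite -(cardsID [set g : {ffun I -> T} | u \in [set g i | i : I]]
                  (cover_ffuns A (U :\ u))).
congr (_ + _); apply: eq_card => g; rewrite !inE.
  by rewrite subUset sub1set -andbA [(u \in _) && _]andbC.
rewrite andbA; congr (_ && _).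
apply/andP/forallP => [[/imsetP uNg /forallP gA] i | gAu].
  by rewrite !inE gA andbT; apply: contra_notN uNg => /eqP <-; exists i.
split; last by apply/forallP => i; have /setD1P[] := gAu i.
by apply/imsetP => -[i _ gi]; have := gAu i; rewrite -gi setD11.
Qed.

Lemma card_cover_ffuns (A U : {set T}) : U \subset A ->
  (#|cover_ffuns A U|%:Z = cover_count #|U| #|A| #|I|)%R.
Proof.
move Us: #|U| => s; elim: s A U Us => [|s IHs] A U Us UA.
  move/eqP: Us; rewrite cards_eq0 => /eqP->.
  rewrite /cover_count big_ord1 expr0 mul1r bin0 subn0 mul1n -card_ffun_on.
  by congr Posz; apply: eq_card => g; rewrite !inE sub0set andbT.
have [u Uu] : {u | u \in U} by apply/sigW/card_gt0P; rewrite Us.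
have Usu : #|U :\ u| = s by move: Us; rewrite (cardsD1 u) Uu => -[].
have Asu : #|A :\ u| = #|A|.-1 by rewrite (cardsD1 u A) (subsetP UA).
have := card_cover_ffuns_split A U u; rewrite setD1K // => split_u.
rewrite cover_countS -Asu -(IHs (A :\ u) (U :\ u)) ?setSD //.
rewrite -(IHs A (U :\ u)) ?split_u ?PoszD ?addrK //.
exact: subset_trans (subD1set U u) UA.
Qed.

End CoverFfuns.

Lemma card_imset_sep (aT rT : finType) (f : aT -> rT) (D : {set aT}) (P : pred rT) :
  {in D &, injective f} -> #|[set y in f @: D | P y]| = #|[set t in D | P (f t)]|.
Proof.
move=> f_inj; rewrite -(card_in_imset (f := f) (D := [set t in D | P (f t)])); last first.
  by move=> t t' /setIdP[Dt _] /setIdP[Dt' _]; apply: f_inj.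
congr #|pred_of_set _|; apply/setP => y; rewrite !inE.
apply/andP/imsetP => [[/imsetP[t Dt ->] Pft]|[t /setIdP[Dt Pft] ->]].
  by exists t; rewrite // inE Dt.
by rewrite imset_f.
Qed.

(** * Lonesum matrices as pairs of level maps *)

Section Encoding.
Variables a b : nat.
Local Notation level := 'I_a.+1.
Local Notation code := ({ffun 'I_a -> level} * {ffun 'I_b -> level})%type.

Definition levels (lo hi : nat) : {set level} := [set t : level | lo <= t < hi].

Lemma card_levels lo hi : hi <= a.+1 -> #|levels lo hi| = hi - lo.
Proof. exact: card_ord_range. Qed.

Definition row_codes (m : nat) := cover_ffuns 'I_a (levels 1 m.+1) (levels 1 m.+1).
Definition col_codes (m : nat) := cover_ffuns 'I_b (levels 0 m.+1) (levels 1 m).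
Definition codes : {set code} :=
  \bigcup_(m : level) setX (row_codes m) (col_codes m).

Definition decode (p : code) : 'M[bool]_(a, b) :=
  threshold_mx (fun i => p.1 i) (fun j => p.2 j).

Definition row_set (A : 'M[bool]_(a, b)) i : {set 'I_b} := [set j | A i j].
Definition row_sets A : {set {set 'I_b}} := [set row_set A i | i : 'I_a].
Definition rank A (R : {set 'I_b}) := #|[set R' in row_sets A | R \subset R']|.
Definition height A j := #|[set R in row_sets A | j \in R]|.

Definition encode A : code :=
  ([ffun i => inord (rank A (row_set A i))], [ffun j => inord (height A j)]).

Section RowChain.
Variable A : 'M[bool]_(a, b).

Lemma row_set_in i : row_set A i \in row_sets A.
Proof. exact: imset_f. Qed.

Lemma card_row_sets : #|row_sets A| <= a.
Proof. by rewrite -[a in _ <= a]card_ord leq_imset_card. Qed.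

Lemma rank_le R : rank A R <= #|row_sets A|.
Proof. by apply/subset_leq_card/subsetP => R'; rewrite inE => /andP[]. Qed.

Lemma height_le j : height A j <= #|row_sets A|.
Proof. by apply/subset_leq_card/subsetP => R; rewrite inE => /andP[]. Qed.

Lemma encode1E i : (encode A).1 i = rank A (row_set A i) :> nat.
Proof. by rewrite ffunE inordK // ltnS (leq_trans (rank_le _) card_row_sets). Qed.

Lemma encode2E j : (encode A).2 j = height A j :> nat.
Proof. by rewrite ffunE inordK // ltnS (leq_trans (height_le _) card_row_sets). Qed.

Lemma rank_gt0 R : R \in row_sets A -> 0 < rank A R.
Proof. by move=> RA; apply/card_gt0P; exists R; rewrite inE RA subxx. Qed.

Lemma rank_proper (R R' : {set 'I_b}) :
  R \in row_sets A -> R \proper R' -> rank A R' < rank A R.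
Proof.
move=> RA /properP[RR' [j R'j Rj]]; apply/proper_card/properP; split.
  by apply/subsetP => R''; rewrite !inE => /andP[-> /(subset_trans RR')].
exists R; first by rewrite inE RA subxx.
by rewrite inE RA /=; apply: contra Rj => /subsetP->.
Qed.

Lemma rank_antitone (R R' : {set 'I_b}) : R \subset R' -> rank A R' <= rank A R.
Proof.
move=> RR'; apply/subset_leq_card/subsetP => R''.
by rewrite !inE => /andP[-> /(subset_trans RR')].
Qed.

Hypothesis swA : switch_free A.

Lemma row_sets_total (R R' : {set 'I_b}) : R \in row_sets A -> R' \in row_sets A ->
  (R \subset R') || (R' \subset R).
Proof.
move=> /imsetP[i _ ->] /imsetP[i' _ ->].
case: (boolP (row_set A i \subset row_set A i')) => //= /subsetPn[j].
rewrite !inE => Aij Ai'j; apply/subsetP => j'; rewrite !inE => Ai'j'.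
by apply/negPn/negP => Aij'; move: Ai'j; rewrite (switch_freeP A swA i i' j j').
Qed.

Lemma rank_subset (R R' : {set 'I_b}) : R \in row_sets A -> R' \in row_sets A ->
  rank A R' <= rank A R -> R \subset R'.
Proof.
move=> RA R'A le_rank; case/orP: (row_sets_total RA R'A) => // R'R.
case: (eqVneq R R') => [->//|neRR'].
have /(rank_proper R'A) : R' \proper R by rewrite properEneq eq_sym neRR'.
by rewrite ltnNge le_rank.
Qed.

Lemma rank_inj : {in row_sets A &, injective (rank A)}.
Proof.
move=> R R' RA R'A eq_rank; apply/eqP; rewrite eqEsubset.
by rewrite !rank_subset ?eq_rank.
Qed.

Lemma rank_onto t : 0 < t <= #|row_sets A| ->
  exists2 R, R \in row_sets A & rank A R = t.
Proof.
set ranks := [seq rank A R | R in row_sets A].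
have [_ ranksE] : (size ranks = size (iota 1 #|row_sets A|))
                  * (ranks =i iota 1 #|row_sets A|).
  apply: uniq_min_size.
  - by rewrite map_inj_in_uniq ?enum_uniq // => R R'; rewrite !mem_enum; apply: rank_inj.
  - move=> r /mapP[R]; rewrite mem_enum mem_iota => RA ->.
    by rewrite rank_gt0 // add1n ltnS rank_le.
  - by rewrite size_map size_iota -cardE.
move=> t_range; move: (ranksE t); rewrite mem_iota add1n ltnS t_range.
by move=> /mapP[R]; rewrite mem_enum => RA ->; exists R.
Qed.

Lemma entry_rank_height i j : A i j = (rank A (row_set A i) <= height A j).
Proof.
case: (boolP (A i j)) => [Aij|nAij]; apply/esym.
  by apply/subset_leq_card/subsetP => R; rewrite !inE => /andP[-> /subsetP->];
    rewrite ?inE.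
apply/negbTE; rewrite -ltnNge; apply/proper_card/properP; split.
  apply/subsetP => R; rewrite !inE => /andP[RA jR]; rewrite RA /=.
  case/orP: (row_sets_total RA (row_set_in i)) => // /subsetP/(_ j jR).
  by rewrite inE (negbTE nAij).
by exists (row_set A i); rewrite !inE row_set_in ?subxx // (negbTE nAij).
Qed.

Lemma decode_encode : decode (encode A) = A.
Proof. by apply/matrixP => i j; rewrite mxE encode1E encode2E entry_rank_height. Qed.

Lemma encode_row_codes : (encode A).1 \in row_codes #|row_sets A|.
Proof.
rewrite !inE; apply/andP; split.
  by apply/forallP => i; rewrite inE encode1E rank_gt0 ?row_set_in //= ltnS rank_le.
apply/subsetP => t; rewrite inE ltnS => t_range.
have [_ /imsetP[i _ ->] rank_t] := rank_onto t_range.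
by apply/imsetP; exists i => //; apply: val_inj; rewrite /= encode1E rank_t.
Qed.

Lemma height_onto t : 0 < t < #|row_sets A| -> exists j, height A j = t.
Proof.
move=> /andP[t_gt0 t_lt].
have [R RA rankR] := rank_onto (t := t) (introT andP (conj t_gt0 (ltnW t_lt))).
have [R' R'A rankR'] := rank_onto (t := t.+1) t_lt.
have /subsetPn[j Rj R'j] : ~~ (R \subset R').
  by apply: contraL t_lt => /rank_antitone; rewrite rankR rankR' ltnn.
exists j; apply/eqP; rewrite -rankR eqn_leq; apply/andP; split; last first.
  by apply/subset_leq_card/subsetP => R''; rewrite !inE => /andP[-> /subsetP->].
apply/subset_leq_card/subsetP => R''; rewrite !inE => /andP[R''A jR'']; rewrite R''A.
apply: rank_subset => //; rewrite rankR -ltnS -rankR'; apply: (rank_proper R'A).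
rewrite properE; apply/andP; split; last by apply/subsetPn; exists j.
case/orP: (row_sets_total R'A R''A) => // /subsetP/(_ j jR'').
by rewrite (negbTE R'j).
Qed.

Lemma encode_col_codes : (encode A).2 \in col_codes #|row_sets A|.
Proof.
rewrite !inE; apply/andP; split.
  by apply/forallP => j; rewrite inE encode2E ltnS height_le.
apply/subsetP => t; rewrite inE => t_range.
have [j height_t] := height_onto t_range.
by apply/imsetP; exists j => //; apply: val_inj; rewrite /= encode2E height_t.
Qed.

Lemma encode_codes : encode A \in codes.
Proof.
apply/bigcupP; exists (inord #|row_sets A|) => //.
by rewrite inordK ?ltnS ?card_row_sets // in_setX encode_row_codes encode_col_codes.
Qed.

End RowChain.

Section Decode.
Variables (m : level) (s : {ffun 'I_a -> level}) (g : {ffun 'I_b -> level}).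
Hypotheses (s_m : s \in row_codes m) (g_m : g \in col_codes m).

Let upset (t : nat) : {set 'I_b} := [set j | t <= g j].

Lemma row_set_decode i : row_set (decode (s, g)) i = upset (s i).
Proof. by apply/setP => j; rewrite !inE mxE. Qed.

Lemma upset_subset (t t' : level) : t \in levels 1 m.+1 -> t' \in levels 1 m.+1 ->
  (upset t \subset upset t') = (t' <= t).
Proof.
rewrite !inE !ltnS => /andP[t_gt0 _] /andP[_ t'_le].
apply/idP/idP => [sub|le_t't]; last first.
  by apply/subsetP => j; rewrite !inE; apply: leq_trans.
rewrite leqNgt; apply/negP => lt_tt'.
move: g_m; rewrite !inE => /andP[_ /subsetP/(_ t)].
rewrite inE t_gt0 (leq_trans lt_tt' t'_le) => /(_ isT)/imsetP[j _ gj].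
by have := subsetP sub j; rewrite !inE -gj leqnn leqNgt lt_tt' => /(_ isT).
Qed.

Lemma upset_inj : {in levels 1 m.+1 &, injective (fun t : level => upset t)}.
Proof.
move=> t t' tm t'm eq_up; apply/val_inj/eqP; rewrite eqn_leq.
by rewrite -!upset_subset // eq_up subxx.
Qed.

Lemma row_sets_decode :
  row_sets (decode (s, g)) = [set upset t | t : level in levels 1 m.+1].
Proof.
move: s_m; rewrite !inE => /andP[/forallP s_range /subsetP s_onto].
apply/setP => R; apply/imsetP/imsetP => [[i _ ->]|[t /s_onto/imsetP[i _ ->] ->]].
  by exists (s i); rewrite ?row_set_decode ?s_range.
by exists i; rewrite ?row_set_decode.
Qed.

Lemma card_levels_le v : v <= m -> #|[set t in levels 1 m.+1 | t <= v]| = v.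
Proof.
move=> le_vm; transitivity (v.+1 - 1); last exact: subn1.
rewrite -card_levels; last first.
  by rewrite !ltnS (leq_trans le_vm) // -ltnS.
by apply: eq_card => t; rewrite !inE !ltnS; apply/idP/idP; lia.
Qed.

Lemma encodeK : encode (decode (s, g)) = (s, g).
Proof.
move: s_m g_m; rewrite !inE => /andP[/forallP s_range _] /andP[/forallP g_range _].
congr pair; apply/ffunP.
  move=> i; apply: val_inj; rewrite /= encode1E.
  rewrite /rank row_sets_decode card_imset_sep ?row_set_decode; last exact: upset_inj.
  rewrite -[RHS](card_levels_le (v := s i)); last first.
    by have := s_range i; rewrite inE ltnS => /andP[].
  apply: eq_card => t; rewrite !inE.
  by case tm: (0 < t < m.+1); rewrite //= upset_subset ?s_range // inE tm.
move=> j; apply: val_inj; rewrite /= encode2E.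
rewrite /height row_sets_decode card_imset_sep; last exact: upset_inj.
rewrite -[RHS](card_levels_le (v := g j)); last by have := g_range j; rewrite inE ltnS.
by apply: eq_card => t; rewrite !inE.
Qed.

End Decode.

Lemma encode_decode p : p \in codes -> encode (decode p) = p.
Proof. by case: p => s g /bigcupP[m _]; rewrite in_setX => /andP[]; apply: encodeK. Qed.

Lemma lonesum_codes : [set A | lonesum A] = decode @: codes.
Proof.
apply/setP => A; rewrite inE; apply/idP/imsetP => [/lonesum_switch_free swA|[p _ ->]].
  by exists (encode A); rewrite ?encode_codes ?decode_encode.
exact: threshold_mx_lonesum.
Qed.

Lemma L_card_codes : L a b = #|codes|.
Proof.
rewrite /L lonesum_codes card_in_imset // => p q p_codes q_codes eq_pq.
by rewrite -(encode_decode p_codes) -(encode_decode q_codes) eq_pq.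
Qed.

Lemma card_codom_row_codes (m : level) s : s \in row_codes m -> #|codom s| = m.
Proof.
rewrite !inE => /andP[/forallP s_range /subsetP s_onto].
transitivity #|levels 1 m.+1|; last by rewrite card_levels // subn1.
apply: eq_card => t; apply/codomP/idP => [[i ->] //|/s_onto/imsetP[i _ ->]].
by exists i.
Qed.

Lemma card_codes : #|codes| = \sum_(m : level) #|row_codes m| * #|col_codes m|.
Proof.
rewrite -sum1_card partition_disjoint_bigcup.
  by apply: eq_bigr => m _; rewrite sum1_card cardsX.
move=> m m' /eqP neq_mm'; apply/pred0P => -[s g] /=; rewrite !in_setX.
apply/negP => /andP[/andP[sm _] /andP[sm' _]]; apply: neq_mm'; apply: val_inj.
by rewrite /= -(card_codom_row_codes sm) (card_codom_row_codes sm').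
Qed.

Lemma card_row_codes (m : level) : (#|row_codes m|%:Z = cover_count m m a)%R.
Proof. by rewrite card_cover_ffuns // card_levels // subn1 card_ord. Qed.

Lemma card_col_codes (m : level) : (#|col_codes m|%:Z = cover_count m.-1 m.+1 b)%R.
Proof.
rewrite card_cover_ffuns; last by apply/subsetP => t; rewrite !inE; lia.
by rewrite !card_levels ?card_ord ?subn1 ?subn0 // ltnW.
Qed.

Lemma dvdn_card_row_codes (m : level) : 0 < a -> m %| #|row_codes m|.
Proof.
move=> a_gt0; rewrite -[_ %| _]/(Posz m %| Posz #|row_codes m|)%Z card_row_codes.
apply: rpred_sum => u _; apply: dvdz_mull; rewrite dvdzE /=.
rewrite -[a in (m - u) ^ a](prednK a_gt0) expnS mulnA [_ * (m - u)]mulnC.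
by rewrite -mul_bin_down -mulnA dvdn_mulr.
Qed.

End Encoding.

(** * Divisibility *)

Lemma Posz_sum (I : finType) (F : I -> nat) :
  Posz (\sum_i F i) = (\sum_i (F i)%:Z)%R.
Proof. exact: (big_morph Posz PoszD). Qed.

Lemma dvdn_expn_totient_pred (M n c : nat) : 0 < M ->
    (forall p, p \in primes M -> logn p M <= n) ->
  M %| c ^ n * (c ^ totient M).-1.
Proof.
move=> M_gt0 le_n; apply/dvdn_partP => // p /[dup] pM /le_n le_pn.
have p_pr : prime p by move: pM; rewrite mem_primes => /andP[].
rewrite p_part; have [pc|pNc] := boolP (p %| c).
  by apply/dvdn_mulr/(dvdn_trans _ (dvdn_exp2r n pc)); rewrite dvdn_exp2l.
apply: dvdn_mull; have c_gt0 : 0 < c by case: c pNc => //; rewrite dvdn0.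
have cX_gt0 : 0 < c ^ totient M by rewrite expn_gt0 c_gt0.
rewrite -subn1 -(eqn_mod_dvd _ cX_gt0).
(* Euler's theorem modulo the [p]-part, whose totient divides [totient M]. *)
rewrite -{1}(partnC p M_gt0) totient_coprime ?coprime_partC // expnM p_part.
rewrite -modnXm Euler_exp_totient ?modnXm ?exp1n //.
by apply: coprimeXr; rewrite coprime_sym prime_coprime.
Qed.

Lemma dvdn_geometric_totient (M n c : nat) : 0 < M ->
    (forall p, p \in primes M -> logn p M <= n) ->
  M %| c * \sum_(i < totient M) c.+1 ^ (n + i).
Proof.
move=> M_gt0 le_n; have := dvdn_expn_totient_pred c.+1 M_gt0 le_n.
rewrite predn_exp mulnCA big_distrr /=.
by under eq_bigr do rewrite -expnD.
Qed.

Lemma dvdn_sum_col_codes a M n (m : 'I_a.+1) : 0 < M ->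
    (forall p, p \in primes M -> logn p M <= n) ->
  M %| m * \sum_(i < totient M) #|col_codes a (n + i) m|.
Proof.
move=> M_gt0 le_n; rewrite -[_ %| _]/(Posz M %| Posz _)%Z PoszM Posz_sum.
under eq_bigr do rewrite card_col_codes.
rewrite /cover_count exchange_big mulr_sumr; apply: rpred_sum => u _ /=.
rewrite -mulr_sumr mulrCA; apply: dvdz_mull.
(* [m * 'C(m.-1, u) = (m - u) * 'C(m, u)] supplies the factor [m - u]. *)
rewrite -Posz_sum -PoszM dvdzE /= -big_distrr /= mulnA mul_bin_down -mulnA.
have -> : m.+1 - u = (m - u).+1 by have := ltn_ord u; lia.
by rewrite mulnCA; apply: dvdn_mull; apply: dvdn_geometric_totient.
Qed.

Theorem theorem3p8 (k M n : nat) (hk : 0 < k) (hM : 0 < M)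
  (hn : forall p, p \in primes M -> logn p M <= n) :
  \sum_(i < totient M) L k (n + i) = 0 %[mod M] /\
  \sum_(i < totient M) L (n + i) k = 0 %[mod M].
Proof.
suff dvd_sum : M %| \sum_(i < totient M) L k (n + i).
  by split; rewrite mod0n; apply/eqP; last under eq_bigr do rewrite L_sym.
under eq_bigr do rewrite L_card_codes card_codes.
rewrite exchange_big; apply: dvdn_sum => m _; rewrite -big_distrr /=.
have [q ->] := dvdnP (dvdn_card_row_codes m hk).
by rewrite -mulnA dvdn_mull // dvdn_sum_col_codes.
Qed.
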